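(* Let $R$ be a commutative unital ring, $G$ a group, $(\mathcal B_1,\Phi_1)\subseteq(\mathcal B_2,\Phi_2)$ a partial subaction of $G$ on generalized Boolean algebras with $\Phi_2=(\{\mathcal I_{2,t}\},\{\phi_{2,t}\})$, and $A_2=\mathrm{Lc}(R,\mathcal B_2)\rtimes_{\Phi_2}G$. Suppose $\mathcal B_1$ is an ideal of $\mathcal B_2$ and that for every $U\in\mathcal B_2$ there exist $g_1,\dots,g_n\in G$ and $V_i\in\mathcal I_{2,g_i^{-1}}\cap\mathcal B_1$ with $U\le\bigcup_{i=1}^n\phi_{2,g_i}(V_i)$. Then for every $U\in\mathcal B_2$ there exist an index set $I$, elements $U_i\in\mathcal B_1$ ($i\in I$) and a surjective left $A_2$-module homomorphism $\bigoplus_{i\in I}A_2(U_i\delta_e)\to A_2(U\delta_e)$.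
   Context: A generalized Boolean algebra is a distributive relatively complemented lattice with least element $0$; an ideal is a subset closed under finite joins and under meets with arbitrary elements. A partial action $\Phi$ of $G$ on $\mathcal B$: ideals $\mathcal I_t$ and isomorphisms $\phi_t:\mathcal I_{t^{-1}}\to\mathcal I_t$ with $\mathcal I_e=\mathcal B$, $\phi_e=\mathrm{id}$, $\phi_s(\mathcal I_{s^{-1}}\cap\mathcal I_t)=\mathcal I_s\cap\mathcal I_{st}$, $\phi_s\phi_t=\phi_{st}$ where defined. A partial subaction: $\mathcal B_1\subseteq\mathcal B_2$ sub generalized Boolean algebra, $\mathcal I_{1,t}\subseteq\mathcal I_{2,t}$, $\phi_{2,t}$ restricting to $\phi_{1,t}$. $\mathrm{Lc}(R,\mathcal B)$ is the algebra of locally constant compactly supported $R$-valued functions on the Stone space of $\mathcal B$, spanned by idempotents $1_U$; $\mathrm{Lc}(R,\mathcal B)\rtimes_\Phi G=\bigoplus_g\mathrm{Lc}(R,\mathcal I_g)\delta_g$ with $U\delta_g:=1_U\delta_g$ and $(U\delta_g)(V\delta_h)=\phi_g(\phi_{g^{-1}}(U)\cap V)\delta_{gh}$. *)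

From HB Require Import structures.
From mathcomp Require Import all_boot all_order all_algebra.
From Stdlib Require Import ClassicalEpsilon.
Set Implicit Arguments. Unset Strict Implicit. Unset Printing Implicit Defensive.
Import Order.Theory GRing.Theory.
Local Open Scope order_scope.

Record group_laws (G : Type) (mul : G -> G -> G) (inv : G -> G) (one : G) : Prop := {
  gmulA : forall x y z, mul x (mul y z) = mul (mul x y) z;
  gmul1 : forall x, mul one x = x;
  gmulV : forall x, mul (inv x) x = one }.

Section GBA.
Context {d : Order.disp_t} {B : cbDistrLatticeType d}.
(* A generalized Boolean algebra = distributive relatively (sectionally)
   complemented lattice with least element: a cbDistrLatticeType. *)

Definition is_sub_gba (S : B -> Prop) : Prop :=
  [/\ S \bot,
      forall x y, S x -> S y -> S (x `|` y),
      forall x y, S x -> S y -> S (Order.meet x y) &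
      forall x y, S x -> S y -> S (x `\` y)].

Definition is_ideal (S J : B -> Prop) : Prop :=
  [/\ forall x, J x -> S x,
      J \bot,
      forall x y, J x -> J y -> J (x `|` y) &
      forall x y, J x -> S y -> J (Order.meet x y)].

(* The maps are
   represented by total functions B -> B, only their values on I (t^-1) matter. *)
Definition is_partial_action (G : Type) (mul : G -> G -> G) (inv : G -> G)
    (one : G) (S : B -> Prop) (I : G -> B -> Prop) (phi : G -> B -> B) : Prop :=
  [/\ (forall t, is_ideal S (I t)),
      ((forall x, I one x <-> S x) /\ (forall x, S x -> phi one x = x)),
      (forall t, [/\ (forall x, I (inv t) x -> I t (phi t x)),
                    (forall x y, I (inv t) x -> I (inv t) y -> phi t x = phi t y -> x = y),
                    (forall y, I t y -> exists2 x, I (inv t) x & phi t x = y),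
                    (forall x y, I (inv t) x -> I (inv t) y ->
                                phi t (x `|` y) = phi t x `|` phi t y) &
                    (forall x y, I (inv t) x -> I (inv t) y ->
                                phi t (Order.meet x y) = Order.meet (phi t x) (phi t y))]),
      (forall s t y, (I s y /\ I (mul s t) y) <->
                     (exists2 x, (I (inv s) x /\ I t x) & phi s x = y)) &
      (forall s t x, I (inv t) x -> I (inv s) (phi t x) ->
                     phi s (phi t x) = phi (mul s t) x)].

Definition is_partial_subaction (G : Type) (mul : G -> G -> G) (inv : G -> G)
    (one : G) (B1 : B -> Prop) (I1 : G -> B -> Prop) (phi1 : G -> B -> B)
    (I2 : G -> B -> Prop) (phi2 : G -> B -> B) : Prop :=
  [/\ is_sub_gba B1,
      is_partial_action mul inv one B1 I1 phi1,
      is_partial_action mul inv one (fun _ => True) I2 phi2,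
      (forall t x, I1 t x -> I2 t x) &
      (forall t x, I1 (inv t) x -> phi2 t x = phi1 t x)].

Definition is_char (x : B -> bool) : Prop :=
  [/\ x \bot = false,
      forall U V, x (U `|` V) = x U || x V,
      forall U V, x (Order.meet U V) = x U && x V &
      exists U, x U].

Definition stone := {x : B -> bool | is_char x}.

End GBA.

Arguments stone {d} B.

Section SkewRing.
Local Open Scope ring_scope.
Context {d : Order.disp_t} {B : cbDistrLatticeType d} (R : comPzRingType).
Context (G : Type) (mul : G -> G -> G) (inv : G -> G) (one : G).
Context (I : G -> B -> Prop) (phi : G -> B -> B).

(* elements of Lc(R,B) >< G are represented as functions G -> Lc(R,B),
   g |-> coefficient of delta_g, where Lc(R,B) is realised as functions on the
   Stone space; a formal sum [:: (r, U, g); ...] denotes sum r (1_U delta_g). *)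
Definition skel := G -> stone B -> R.

Definition fsum (l : seq (R * B * G)) : skel :=
  fun k x => \sum_(t <- l)
     (if excluded_middle_informative (t.2 = k)
      then t.1.1 * (sval x t.1.2)%:R else 0).

Definition valid (l : seq (R * B * G)) : Prop :=
  forall t, List.In t l -> I t.2 t.1.2.

Definition inA (a : skel) : Prop := exists2 l, valid l & fsum l = a.

(* product of formal sums: (U delta_g)(V delta_h) = phi_g(phi_{g^-1}(U) /\ V) delta_{gh} *)
Definition lmul (l m : seq (R * B * G)) : seq (R * B * G) :=
  [seq (t.1.1 * s.1.1, phi t.2 (Order.meet (phi (inv t.2) t.1.2) s.1.2), mul t.2 s.2)
  | t : R * B * G <- l, s : R * B * G <- m].

Definition rep (a : skel) : seq (R * B * G) :=
  epsilon (inhabits [::]) (fun l => valid l /\ fsum l = a).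

Definition amul (a b : skel) : skel := fsum (lmul (rep a) (rep b)).

Definition aadd (a b : skel) : skel := fun g x => a g x + b g x.
Definition azero : skel := fun _ _ => 0.

Definition delta (U : B) (g : G) : skel := fsum [:: (1, U, g)].

Definition lideal (U : B) : skel -> Prop :=
  fun y => exists2 a, inA a & y = amul a (delta U one).

Definition in_dsum (J : Type) (Us : J -> B) (m : J -> skel) : Prop :=
  (forall i, lideal (Us i) (m i)) /\
  exists s : seq J, forall i, ~ List.In i s -> m i = azero.

Definition surj_module_hom (J : Type) (Us : J -> B) (U : B)
    (h : (J -> skel) -> skel) : Prop :=
  [/\ forall m, in_dsum Us m -> lideal U (h m),
      forall m m', in_dsum Us m -> in_dsum Us m' ->
         h (fun i => aadd (m i) (m' i)) = aadd (h m) (h m'),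
      forall a m, inA a -> in_dsum Us m ->
         h (fun i => amul a (m i)) = amul a (h m) &
      forall y, lideal U y -> exists2 m, in_dsum Us m & h m = y].

End SkewRing.

From Pilot Require Import Defs.
From HB Require Import structures.
From mathcomp Require Import all_boot all_order all_algebra.
From Stdlib Require Import ClassicalEpsilon FunctionalExtensionality.
Import Order.Theory GRing.Theory.
Local Open Scope order_scope.

(* Cover U by translates phi_(g_i)(V_i) with V_i in B1 and refine the cover to the disjoint
   pieces D_i = (U minus the earlier translates) /\ phi_(g_i)(V_i), so that sum_i 1_(D_i) = 1_U.
   The map (m_i)_i |-> sum_i m_i (V_i delta_(g_i^-1)) (U delta_e) is A-linear from
   (+)_i A (V_i delta_e) to A (U delta_e), and it is onto because
   (D_i delta_(g_i)) (V_i delta_e) (V_i delta_(g_i^-1)) (U delta_e) = D_i delta_e, so that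
   a (U delta_e) = sum_i a (D_i delta_e) is the image of m_i = a (D_i delta_(g_i)) (V_i delta_e).
   Most of the work is to show that the product, computed on chosen formal-sum representatives,
   is well defined, associative and biadditive.  For this, the delta_k-coefficient of
   (1_W delta_g) b at a point x of the Stone space is written as 1_W(x) times the
   delta_(g^-1 k)-coefficient of b at the image of x under the partial homeomorphism dual to
   phi_g; it then depends on b only as a function. *)

Section SeqFacts.
Set Implicit Arguments. Unset Strict Implicit.

Lemma In_mem (T : eqType) (s : seq T) x : x \in s -> List.In x s.
Proof. by elim: s => //= y s IH; rewrite inE => /predU1P [->|/IH]; [left | right]. Qed.

Lemma In_nth (T : Type) (x0 : T) (s : seq T) i : (i < size s)%N -> List.In (nth x0 s i) s.
Proof. by elim: s i => [|y s IH] [|i] //= lt_is; [left | right; apply: IH]. Qed.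

Lemma eq_big_In (R T : Type) (idx : R) (op : R -> R -> R) (l : seq T) (F1 F2 : T -> R) :
  (forall t, List.In t l -> F1 t = F2 t) ->
  \big[op/idx]_(t <- l) F1 t = \big[op/idx]_(t <- l) F2 t.
Proof.
elim: l => [|t l IH] eqF; first by rewrite !big_nil.
by rewrite !big_cons eqF ?IH //; [move=> u lu; apply: eqF; right | left].
Qed.

Local Open Scope ring_scope.

Lemma sum_by_key0 (K T : Type) (R : pzRingType) (l : seq T) (key : T -> K) (c : T -> R) :
  (forall g, \sum_(t <- l) (if excluded_middle_informative (key t = g) then c t else 0) = 0) ->
  forall F : K -> R, \sum_(t <- l) F (key t) * c t = 0.
Proof.
move=> + F; have [n] := ubnP (size l); elim: n l => // n IH [|t l] lt_l key0.
  by rewrite big_nil.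
pose other u := if excluded_middle_informative (key u = key t) then false else true.
have split_key u : F (key u) * c u =
    (if excluded_middle_informative (key u = key t) then F (key t) * c u else 0)
    + (if other u then F (key u) * c u else 0).
  by rewrite /other; case: excluded_middle_informative => [e|_] /=; rewrite ?e ?addr0 ?add0r.
rewrite (eq_bigr _ (fun u _ => split_key u)) big_split /=.
have -> : \sum_(u <- t :: l)
    (if excluded_middle_informative (key u = key t) then F (key t) * c u else 0)
    = F (key t) * \sum_(u <- t :: l)
                  (if excluded_middle_informative (key u = key t) then c u else 0).
  rewrite big_distrr; apply: eq_bigr => u _.
  by case: excluded_middle_informative => ? /=; rewrite ?mulr0.
rewrite key0 mulr0 add0r -big_mkcond -big_filter; apply: IH => [|g].
  rewrite /= {1}/other; case: excluded_middle_informative => //= _.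
  by rewrite size_filter (leq_ltn_trans (count_size _ _)).
rewrite big_filter big_mkcond /=.
case: (excluded_middle_informative (g = key t)) => [->|ne_gt].
  by apply: big1 => u _; rewrite /other; case: excluded_middle_informative.
apply: etrans (key0 g); apply: eq_bigr => u _; rewrite /other.
case: excluded_middle_informative => [e|] //=; case: excluded_middle_informative => // e'.
by case: ne_gt; rewrite -e' e.
Qed.

End SeqFacts.

Section SkewGroupRing.
Set Implicit Arguments. Unset Strict Implicit.

Variables (G : Type) (mul : G -> G -> G) (inv : G -> G) (one : G).
Hypothesis GL : group_laws mul inv one.

Lemma gmulKV x y : mul (inv x) (mul x y) = y.
Proof. by rewrite (gmulA GL) (gmulV GL) (gmul1 GL). Qed.

Lemma gmulxV x : mul x (inv x) = one.
Proof.
rewrite -[LHS](gmul1 GL) -[X in mul X _](gmulV GL (inv x)) -(gmulA GL).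
by rewrite (gmulKV x) (gmulV GL).
Qed.

Lemma gmulx1 x : mul x one = x.
Proof. by rewrite -(gmulV GL x) (gmulA GL) gmulxV (gmul1 GL). Qed.

Lemma ginvK x : inv (inv x) = x.
Proof. by rewrite -(gmulx1 (inv (inv x))) -(gmulV GL x) (gmulA GL) (gmulV GL) (gmul1 GL). Qed.

Lemma ginv_unique a b : mul a b = one -> b = inv a.
Proof. by move=> ab1; rewrite -(gmulKV a b) ab1 gmulx1. Qed.

Lemma ginvM a b : inv (mul a b) = mul (inv b) (inv a).
Proof.
by symmetry; apply: ginv_unique; rewrite -(gmulA GL) (gmulA GL b) gmulxV (gmul1 GL) gmulxV.
Qed.

Lemma ginv1 : inv one = one.
Proof. by symmetry; apply: ginv_unique; rewrite (gmul1 GL). Qed.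

Lemma gmul_eqVl a b c : mul a b = c <-> b = mul (inv a) c.
Proof. by split=> [<-|->]; rewrite ?gmulKV // (gmulA GL) gmulxV (gmul1 GL). Qed.

(** * Partial actions on a generalized Boolean algebra *)

Variables (d : Order.disp_t) (B : cbDistrLatticeType d).
Variables (I : G -> B -> Prop) (phi : G -> B -> B).
Hypothesis PA : is_partial_action mul inv one (fun _ : B => True) I phi.

Lemma dom0 t : I t \bot.
Proof. by case: PA => /(_ t) []. Qed.

Lemma domIr t x y : I t x -> I t (x `&` y).
Proof. by case: PA => /(_ t) [_ _ _ meetI] *; apply: meetI. Qed.

Lemma domIl t x y : I t y -> I t (x `&` y).
Proof. by rewrite meetC; apply: domIr. Qed.

Lemma dom_le t x y : y <= x -> I t x -> I t y.
Proof. by move=> le_yx Ix; rewrite -(meet_r le_yx); apply: domIr. Qed.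

Lemma dom1 x : I one x.
Proof. by case: PA => _ [I1 _] _ _ _; apply/I1. Qed.

Lemma phi1 x : phi one x = x.
Proof. by case: PA => _ [_ phi1] _ _ _; apply: phi1. Qed.

Lemma phi_dom t x : I (inv t) x -> I t (phi t x).
Proof. by case: PA => _ _ /(_ t) [phiI _ _ _ _] _ _; apply: phiI. Qed.

Lemma phi_onto t y : I t y -> exists2 x, I (inv t) x & phi t x = y.
Proof. by case: PA => _ _ /(_ t) [_ _ onto _ _] _ _; apply: onto. Qed.

Lemma phiU t x y : I (inv t) x -> I (inv t) y -> phi t (x `|` y) = phi t x `|` phi t y.
Proof. by case: PA => _ _ /(_ t) [_ _ _ phiU _] _ _; apply: phiU. Qed.

Lemma phiI t x y : I (inv t) x -> I (inv t) y -> phi t (x `&` y) = phi t x `&` phi t y.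
Proof. by case: PA => _ _ /(_ t) [_ _ _ _ phiI] _ _; apply: phiI. Qed.

Lemma phiM s t x : I (inv t) x -> I (inv s) (phi t x) -> phi s (phi t x) = phi (mul s t) x.
Proof. by case: PA => _ _ _ _ phiM; apply: phiM. Qed.

Lemma phi_domM s t x : I (inv s) x -> I t x -> I (mul s t) (phi s x).
Proof.
move=> Ix Itx; case: PA => _ _ _ img _.
by have [] := proj2 (img s t (phi s x)); first by exists x.
Qed.

Lemma phiV_dom t x : I t x -> I (inv t) (phi (inv t) x).
Proof. by move=> Ix; apply: phi_dom; rewrite ginvK. Qed.

Lemma phiK t x : I t x -> phi t (phi (inv t) x) = x.
Proof. by move=> Ix; rewrite phiM ?gmulxV ?phi1 ?ginvK //; apply: phiV_dom. Qed.

Lemma phiVK t x : I (inv t) x -> phi (inv t) (phi t x) = x.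
Proof. by move=> Ix; rewrite phiM ?(gmulV GL) ?phi1 // ginvK; apply: phi_dom. Qed.

Lemma phi0 t : phi t \bot = \bot.
Proof.
have [x Ix phix0] := phi_onto (dom0 t).
by rewrite -[in LHS](meetx0 x) phiI ?phix0 ?meet0x //; apply: dom0.
Qed.

Lemma phi_le t x y : I (inv t) y -> x <= y -> phi t x <= phi t y.
Proof.
move=> Iy le_xy; have Ix := dom_le le_xy Iy.
by rewrite -(meet_l le_xy) phiI // leIr.
Qed.

Definition msupp g U V := phi g (phi (inv g) U `&` V).

Lemma msupp_dom g h U V : I g U -> I h V -> I (mul g h) (msupp g U V).
Proof. by move=> IU IV; apply: phi_domM; [apply/domIr/phiV_dom | apply: domIl]. Qed.

Lemma msupp_le g U V : I g U -> msupp g U V <= U.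
Proof. by move=> IU; rewrite -{2}(phiK IU); apply: phi_le (phiV_dom IU) (leIl _ _). Qed.

Lemma msuppIl g U W V : I g U -> I g W -> msupp g U V `&` W = U `&` msupp g W V.
Proof.
move=> IU IW; rewrite /msupp -{1}(phiK IW) -{2}(phiK IU).
have IUV : I (inv g) (phi (inv g) U `&` V) by apply/domIr/phiV_dom.
have IWV : I (inv g) (phi (inv g) W `&` V) by apply/domIr/phiV_dom.
have IU' := phiV_dom IU; have IW' := phiV_dom IW.
by rewrite -!phiI // -meetA [V `&` _]meetC.
Qed.

Lemma msuppA g h U V W : I g U -> I h V ->
  msupp (mul g h) (msupp g U V) W = msupp g U (msupp h V W).
Proof.
move=> IU IV; rewrite /msupp.
set P := phi (inv g) U `&` V.
have IgP : I (inv g) P by apply/domIr/phiV_dom.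
have IhP : I h P by apply: domIl.
have -> : phi (inv (mul g h)) (phi g P) = phi (inv h) P.
  by rewrite ginvM -phiM ?phiVK ?ginvK //; apply: phi_dom.
set Q := phi (inv h) P `&` W.
have IhP' : I (inv h) (phi (inv h) P) by apply: phiV_dom.
have IQ : I (inv h) Q by apply: domIr.
have le_QP : phi h Q <= P by rewrite -(phiK IhP); apply: phi_le IhP' (leIl _ _).
rewrite -phiM //; last exact: dom_le le_QP IgP.
congr (phi g _).
have IV' : I (inv h) (phi (inv h) V) by apply: phiV_dom.
have le_PV : phi (inv h) P <= phi (inv h) V by apply: phi_le; rewrite ?ginvK ?leIr.
rewrite /Q -(meet_l le_PV) -meetA phiI ?phiK //; last exact: domIr.
rewrite /P -meetA.
by congr (_ `&` _); apply: meet_r; rewrite -{2}(phiK IV); apply: phi_le IV' (leIl _ _).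
Qed.

(** * Points of the Stone space *)

Lemma char0 (x : stone B) : sval x \bot = false. Proof. by case: x => ? []. Qed.

Lemma charU (x : stone B) U V : sval x (U `|` V) = sval x U || sval x V.
Proof. by case: x => ? []. Qed.

Lemma charI (x : stone B) U V : sval x (U `&` V) = sval x U && sval x V.
Proof. by case: x => ? []. Qed.

Lemma char_le (x : stone B) U V : U <= V -> sval x U -> sval x V.
Proof. by move=> le_UV xU; move: (charI x U V); rewrite (meet_l le_UV) xU. Qed.

Lemma char_msupp g U W V (x : stone B) : I g U -> I g W -> sval x W ->
  sval x (msupp g U V) = sval x U && sval x (msupp g W V).
Proof. by move=> IU IW xW; rewrite -charI -msuppIl // charI xW andbT. Qed.

Lemma is_char_shift g W (x : stone B) : I g W -> sval x W ->
  is_char (fun V => sval x (msupp g W V)).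
Proof.
move=> IW xW; have IW' := phiV_dom IW; rewrite /is_char /msupp; split.
- by rewrite meetx0 phi0 char0.
- by move=> V1 V2; rewrite meetUr phiU ?charU //; apply: domIr.
- by move=> V1 V2; rewrite -{1}(meetxx (phi (inv g) W)) meetACA phiI ?charI //; apply: domIr.
- by exists (phi (inv g) W); rewrite meetxx phiK.
Qed.

Definition shift_char g W (x : stone B) (IW : I g W) (xW : sval x W) : stone B :=
  exist _ _ (is_char_shift IW xW).

(** * The skew group ring *)

Variable R : comPzRingType.
Local Open Scope ring_scope.
Notation skel := (@skel d B R G).
Notation lst := (seq (R * B * G)).
Notation lmul := (lmul mul inv phi).
Notation amul := (amul mul inv I phi).
Notation inA := (inA I).
Notation valid := (valid I).
Notation delta := (delta R).
Notation azero := (@azero d B R G).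

(* The coefficient of [delta_k] in [(1_W delta_g) b] at [x], for any [W] in [I g] containing
   [x] (by [char_msupp] the choice of [W] is irrelevant); [0] if there is no such [W]. *)
Definition shift_coef (b : skel) (k : G) (x : stone B) (g : G) : R :=
  match excluded_middle_informative (exists W, I g W /\ sval x W) with
  | left ex_W => let W := constructive_indefinite_description _ ex_W in
      b (mul (inv g) k) (shift_char (proj1 (proj2_sig W)) (proj2 (proj2_sig W)))
  | right _ => 0
  end.

Lemma sum_lmul1 (t : R * B * G) (m : lst) k (x : stone B) : I t.2 t.1.2 ->
  \sum_(s <- m) (if excluded_middle_informative (mul t.2 s.2 = k)
                 then t.1.1 * s.1.1 * (sval x (msupp t.2 t.1.2 s.1.2))%:R else 0)
  = t.1.1 * (sval x t.1.2)%:R * shift_coef (fsum m) k x t.2.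
Proof.
case: t => [[r U] g] /= IU; case xU: (sval x U); last first.
  rewrite mulr0 mul0r big1 // => s _; case: excluded_middle_informative => //= _.
  by rewrite (contraFF (char_le (msupp_le _ IU)) xU) mulr0.
rewrite /shift_coef; case: excluded_middle_informative => [ex_W|]; last by case; exists U.
case: (constructive_indefinite_description _ ex_W) => W [IW xW] /=.
rewrite /fsum mulr1 big_distrr /=; apply: eq_bigr => s _.
case: excluded_middle_informative => gs_k; case: excluded_middle_informative => s_gk //=.
- by rewrite (char_msupp _ IU IW xW) xU mulrA.
- by case: s_gk; apply/gmul_eqVl.
- by case: gs_k; apply/gmul_eqVl.
- by rewrite mulr0.
Qed.

Lemma fsum_lmulE (l m : lst) k (x : stone B) : valid l ->
  fsum (lmul l m) k x = \sum_(t <- l) t.1.1 * (sval x t.1.2)%:R * shift_coef (fsum m) k x t.2.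
Proof.
rewrite /fsum /lmul big_allpairs_dep /=.
elim: l => [|t l IH] vl; first by rewrite !big_nil.
rewrite !big_cons IH => [|u lu]; last by apply: vl; right.
by rewrite -sum_lmul1 //; apply: vl; left.
Qed.

Lemma skel_ext (a b : skel) : (forall k x, a k x = b k x) -> a = b.
Proof. by move=> eq_ab; do 2![apply: functional_extensionality => ?]. Qed.

Lemma fsum_lmul_wd (l l' m m' : lst) : valid l -> valid l' ->
  fsum l = fsum l' -> fsum m = fsum m' -> fsum (lmul l m) = fsum (lmul l' m').
Proof.
move=> vl vl' ll' mm'; apply: skel_ext => k x.
rewrite !fsum_lmulE // mm'; apply/eqP; rewrite -subr_eq0; apply/eqP.
pose neg (t : R * B * G) := (- t.1.1, t.1.2, t.2).
have key0 g : \sum_(t <- l ++ map neg l')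
    (if excluded_middle_informative (t.2 = g) then t.1.1 * (sval x t.1.2)%:R else 0) = 0.
  have := congr1 (fun f => f g x) ll'; rewrite /fsum big_cat big_map /= => ->.
  rewrite -big_split /=; apply: big1 => t _.
  by case: excluded_middle_informative => ? /=; rewrite ?mulNr ?subrr ?addr0.
have := sum_by_key0 key0 (fun g => shift_coef (fsum m') k x g).
rewrite big_cat big_map /= => sum0; rewrite -[RHS]sum0 -sumrN.
by congr (_ + _); apply: eq_bigr => t _; rewrite ?mulNr ?mulrN mulrC.
Qed.

Lemma lmul_cons t (l m : lst) : lmul (t :: l) m =
  map (fun s => (t.1.1 * s.1.1, msupp t.2 t.1.2 s.1.2, mul t.2 s.2)) m ++ lmul l m.
Proof. by []. Qed.

Lemma lmul_catl (l1 l2 m : lst) : lmul (l1 ++ l2) m = lmul l1 m ++ lmul l2 m.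
Proof. by elim: l1 => [|t l1 IH] //=; rewrite !lmul_cons IH catA. Qed.

Lemma valid_cat (l m : lst) : valid l -> valid m -> valid (l ++ m).
Proof. by move=> vl vm t lmt; case: (List.in_app_or _ _ _ lmt); [apply: vl | apply: vm]. Qed.

Lemma valid_lmul (l m : lst) : valid l -> valid m -> valid (lmul l m).
Proof.
elim: l => [|t l IH] vl vm; first by [].
rewrite lmul_cons; apply: valid_cat; last by apply: IH => // u lu; apply: vl; right.
move=> u /List.in_map_iff [s [<- ms]] /=.
by apply: msupp_dom; [apply: vl; left | apply: vm].
Qed.

Lemma fsum_cat (l m : lst) : fsum (l ++ m) = aadd (fsum l) (fsum m).
Proof. by apply: skel_ext => k x; rewrite /fsum big_cat. Qed.

Lemma fsum_nil : fsum ([::] : lst) = azero.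
Proof. by apply: skel_ext => k x; rewrite /fsum big_nil. Qed.

Lemma fsum_lmul_catr (l m1 m2 : lst) :
  fsum (lmul l (m1 ++ m2)) = aadd (fsum (lmul l m1)) (fsum (lmul l m2)).
Proof.
apply: skel_ext => k x; rewrite /fsum /aadd /lmul !big_allpairs_dep -big_split /=.
by apply: eq_bigr => t _; rewrite big_cat.
Qed.

Lemma fsum_lmulA (l m n : lst) : valid l -> valid m ->
  fsum (lmul (lmul l m) n) = fsum (lmul l (lmul m n)).
Proof.
move=> vl vm; apply: skel_ext => k x; rewrite /fsum /lmul !big_allpairs_dep /=.
apply: eq_big_In => t lt; rewrite big_allpairs_dep /=.
apply: eq_big_In => s ms; apply: eq_bigr => w _.
by have := msuppA w.1.2 (vl _ lt) (vm _ ms); rewrite /msupp => ->; rewrite (gmulA GL) mulrA.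
Qed.

Lemma rep_spec (a : skel) : inA a -> valid (rep I a) /\ fsum (rep I a) = a.
Proof.
case=> l vl la; apply: (epsilon_spec (inhabits [::]) (fun l : lst => valid l /\ fsum l = a)).
by exists l.
Qed.

Lemma amul_fsum (l m : lst) : valid l -> valid m -> amul (fsum l) (fsum m) = fsum (lmul l m).
Proof.
move=> vl vm.
have Al : inA (fsum l) by exists l.
have Am : inA (fsum m) by exists m.
have [vl' ll'] := rep_spec Al; have [vm' mm'] := rep_spec Am.
exact: fsum_lmul_wd.
Qed.

Lemma inA_amul (a b : skel) : inA a -> inA b -> inA (amul a b).
Proof.
case=> l vl <- [m vm <-]; exists (lmul l m); first exact: valid_lmul.
by rewrite amul_fsum.
Qed.

Lemma inA_aadd (a b : skel) : inA a -> inA b -> inA (aadd a b).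
Proof. by case=> l vl <- [m vm <-]; exists (l ++ m); [apply: valid_cat | apply: fsum_cat]. Qed.

Lemma inA_azero : inA azero.
Proof. by exists [::]; [case | apply: fsum_nil]. Qed.

Lemma valid1 (r : R) U g : I g U -> valid [:: (r, U, g)].
Proof. by move=> IU t [<-|[]]. Qed.

Lemma inA_delta U g : I g U -> inA (delta U g).
Proof. by move=> IU; exists [:: (1, U, g)]; first exact: valid1. Qed.

Lemma amulDl (a b c : skel) : inA a -> inA b -> inA c ->
  amul (aadd a b) c = aadd (amul a c) (amul b c).
Proof.
case=> l vl <- [m vm <-] [n vn <-].
by rewrite -fsum_cat !amul_fsum ?lmul_catl ?fsum_cat //; apply: valid_cat.
Qed.

Lemma amulDr (a b c : skel) : inA a -> inA b -> inA c ->
  amul a (aadd b c) = aadd (amul a b) (amul a c).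
Proof.
case=> l vl <- [m vm <-] [n vn <-].
by rewrite -fsum_cat !amul_fsum ?fsum_lmul_catr //; apply: valid_cat.
Qed.

Lemma amulA (a b c : skel) : inA a -> inA b -> inA c ->
  amul (amul a b) c = amul a (amul b c).
Proof.
case=> l vl <- [m vm <-] [n vn <-].
by rewrite !amul_fsum ?fsum_lmulA //; apply: valid_lmul.
Qed.

Lemma amul0l (c : skel) : inA c -> amul azero c = azero.
Proof. by case=> n vn <-; rewrite -fsum_nil amul_fsum. Qed.

Lemma amul0r (a : skel) : inA a -> amul a azero = azero.
Proof. by case=> l vl <-; rewrite -fsum_nil amul_fsum //; elim: l {vl}. Qed.

Lemma amul_delta U V g h : I g U -> I h V ->
  amul (delta U g) (delta V h) = delta (msupp g U V) (mul g h).
Proof.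
move=> IU IV; rewrite /delta amul_fsum; try exact: valid1.
by rewrite /Defs.lmul /= mulr1.
Qed.

Lemma delta_chain g V D U : I (inv g) V -> (D <= phi g V)%O -> (D <= U)%O ->
  amul (delta D g) (amul (delta V one) (amul (delta V (inv g)) (delta U one)))
  = delta D one.
Proof.
move=> IV le_DV le_DU; have ID : I g D := dom_le le_DV (phi_dom IV).
have IVU : I (mul (inv g) one) (msupp (inv g) V U) := msupp_dom IV (dom1 U).
have IVVU := msupp_dom (dom1 V) IVU.
rewrite (amul_delta IV (dom1 U)) (amul_delta (dom1 V) IVU) (amul_delta ID IVVU).
rewrite gmulx1 (gmul1 GL) gmulxV /msupp ginv1 !phi1 ginvK; congr (delta _ one).
have IgV : I (inv (inv g)) (phi g V) by rewrite ginvK; apply: phi_dom.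
have le_D'V : (phi (inv g) D <= V)%O by rewrite -(phiVK IV); apply: phi_le.
have le_D'VU : (phi (inv g) D <= phi (inv g) (phi g V `&` U))%O.
  by apply: phi_le; [apply: domIr | rewrite lexI le_DV].
by rewrite meet_l ?phiK // lexI le_D'V.
Qed.

Notation lideal := (@lideal d B R G mul inv one I phi).

Lemma lideal_inA U y : lideal U y -> inA y.
Proof. by case=> a Aa ->; apply: inA_amul Aa (inA_delta (dom1 U)). Qed.

Definition asum (J : Type) (r : seq J) (f : J -> skel) : skel :=
  fun k x => \sum_(j <- r) f j k x.

Lemma asum_nil (J : Type) (f : J -> skel) : asum [::] f = azero.
Proof. by apply: skel_ext => k x; rewrite /asum big_nil. Qed.

Lemma asum_cons (J : Type) j r (f : J -> skel) : asum (j :: r) f = aadd (f j) (asum r f).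
Proof. by apply: skel_ext => k x; rewrite /asum big_cons. Qed.

Lemma asumD (J : Type) r (f f' : J -> skel) :
  asum r (fun j => aadd (f j) (f' j)) = aadd (asum r f) (asum r f').
Proof. by apply: skel_ext => k x; rewrite /asum /aadd big_split. Qed.

Lemma inA_asum (J : Type) r (f : J -> skel) : (forall j, inA (f j)) -> inA (asum r f).
Proof.
move=> Af; elim: r => [|j r IH]; first by rewrite asum_nil; apply: inA_azero.
by rewrite asum_cons; apply: inA_aadd.
Qed.

Lemma amul_asumr (J : Type) r (f : J -> skel) a : inA a -> (forall j, inA (f j)) ->
  amul a (asum r f) = asum r (fun j => amul a (f j)).
Proof.
move=> Aa Af; elim: r => [|j r IH]; first by rewrite !asum_nil amul0r.
by rewrite !asum_cons amulDr ?IH //; apply: inA_asum.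
Qed.

Lemma lideal_asum (J : Type) r (f : J -> skel) U :
  (forall j, lideal U (f j)) -> lideal U (asum r f).
Proof.
move=> Lf; elim: r => [|j r IH].
  by exists azero; rewrite ?asum_nil ?amul0l //; [apply: inA_azero | apply/inA_delta/dom1].
rewrite asum_cons; have [a Aa ->] := Lf j; have [b Ab ->] := IH.
exists (aadd a b); first exact: inA_aadd.
by rewrite amulDl //; apply/inA_delta/dom1.
Qed.

(** * The covering homomorphism *)

Fixpoint pieces (U : B) (W : seq B) : seq B :=
  if W is w :: W' then (U `&` w) :: pieces (U `\` w) W' else [::].

Lemma size_pieces U W : size (pieces U W) = size W.
Proof. by elim: W U => //= w W IH U; rewrite IH. Qed.

Lemma nth_pieces_le U W i :
  (nth \bot (pieces U W) i <= U)%O && (nth \bot (pieces U W) i <= nth \bot W i)%O.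
Proof.
elim: W U i => [|w W IH] U [|i] /=; rewrite ?nth_nil ?le0x ?leIl ?leIr //.
by have /andP [le_U ->] := IH (U `\` w) i; rewrite (le_trans le_U) ?leBx.
Qed.

Lemma pieces_partition U W (x : stone B) : (U <= \join_(w <- W) w)%O ->
  \sum_(D <- pieces U W) ((sval x D)%:R : R) = (sval x U)%:R.
Proof.
elim: W U => [|w W IH] U /=.
  by rewrite big_nil lex0 => /eqP ->; rewrite big_nil char0.
rewrite !big_cons => le_U; rewrite IH; last by rewrite leBLR.
have -> : sval x U = sval x (U `&` w)%O || sval x (U `\` w)%O by rewrite -charU joinIB.
have : sval x (U `&` w)%O && sval x (U `\` w)%O = false by rewrite -charI meetIB char0.
by case: (sval x _); case: (sval x _) => //= _; rewrite ?addr0 ?add0r.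
Qed.

Section CoverHom.

Variables (n : nat) (g : 'I_n -> G) (V D : 'I_n -> B) (U : B).
Hypothesis domV : forall i, I (inv (g i)) (V i).
Hypothesis D_le_phiV : forall i, (D i <= phi (g i) (V i))%O.
Hypothesis D_le_U : forall i, (D i <= U)%O.
Hypothesis D_partition : forall x : stone B, \sum_i ((sval x (D i))%:R : R) = (sval x U)%:R.

Definition cover_coef i := amul (delta (V i) (inv (g i))) (delta U one).

Definition cover_hom (m : 'I_n -> skel) : skel :=
  asum (index_enum 'I_n) (fun i => amul (m i) (cover_coef i)).

Notation in_dsum := (@in_dsum d B R G mul inv one I phi _ V).

Lemma inA_cover_coef i : inA (cover_coef i).
Proof. by apply: inA_amul; apply: inA_delta; [apply: domV | apply: dom1]. Qed.

Lemma cover_hom_lideal m : in_dsum m -> lideal U (cover_hom m).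
Proof.
case=> Lm _; apply: lideal_asum => i; have [a Aa ->] := Lm i.
have AaV : inA (amul a (delta (V i) one)) by apply/inA_amul/inA_delta/dom1.
have AVg : inA (delta (V i) (inv (g i))) by apply/inA_delta/domV.
exists (amul (amul a (delta (V i) one)) (delta (V i) (inv (g i)))); first exact: inA_amul.
by rewrite [RHS]amulA //; apply/inA_delta/dom1.
Qed.

Lemma cover_homD m m' : in_dsum m -> in_dsum m' ->
  cover_hom (fun i => aadd (m i) (m' i)) = aadd (cover_hom m) (cover_hom m').
Proof.
case=> Lm _ [Lm' _]; rewrite /cover_hom -asumD; congr asum.
apply: functional_extensionality => i; apply: amulDl; last exact: inA_cover_coef.
  exact: lideal_inA (Lm i).
exact: lideal_inA (Lm' i).
Qed.

Lemma cover_homZ a m : inA a -> in_dsum m ->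
  cover_hom (fun i => amul a (m i)) = amul a (cover_hom m).
Proof.
move=> Aa [Lm _]; have Am i := lideal_inA (Lm i).
rewrite /cover_hom amul_asumr //; last by move=> i; apply/inA_amul/inA_cover_coef.
congr asum; apply: functional_extensionality => i.
exact: amulA Aa (Am i) (inA_cover_coef i).
Qed.

Lemma cover_hom_onto y : lideal U y -> exists2 m, in_dsum m & cover_hom m = y.
Proof.
case=> a Aa ->; have ID i : I (g i) (D i) := dom_le (D_le_phiV i) (phi_dom (domV i)).
have AaD i : inA (amul a (delta (D i) (g i))) by apply/inA_amul/inA_delta.
exists (fun i => amul (amul a (delta (D i) (g i))) (delta (V i) one)).
  split=> [i|]; first by exists (amul a (delta (D i) (g i))).
  by exists (index_enum 'I_n) => i []; apply: In_mem; rewrite mem_index_enum.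
rewrite /cover_hom.
have -> : (fun i => amul (amul (amul a (delta (D i) (g i))) (delta (V i) one)) (cover_coef i))
          = (fun i => amul a (delta (D i) one)).
  apply: functional_extensionality => i.
  have AV := inA_delta (dom1 (V i)); have AD := inA_delta (ID i).
  have AaDi := AaD i; have AC := inA_cover_coef i; have AVC := inA_amul AV AC.
  by rewrite !amulA // (delta_chain (domV i) (D_le_phiV i) (D_le_U i)).
rewrite -amul_asumr // => [|i]; last by apply/inA_delta/dom1.
congr (amul a _); apply: skel_ext => k x; rewrite /asum /delta /fsum.
under eq_bigr do rewrite big_seq1 /=.
rewrite big_seq1 /=; case: excluded_middle_informative => _ /=; last by rewrite big1.
by rewrite mul1r -D_partition; apply: eq_bigr => i _; rewrite mul1r.
Qed.

Lemma surj_cover_hom : surj_module_hom mul inv one I phi V U cover_hom.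
Proof.
constructor; [exact: cover_hom_lideal | exact: cover_homD | exact: cover_homZ |].
exact: cover_hom_onto.
Qed.

End CoverHom.

Lemma cover_surj_module_hom U (cl : seq (G * B)) :
  (forall p, List.In p cl -> I (inv p.1) p.2) -> (U <= \join_(p <- cl) phi p.1 p.2)%O ->
  exists h : ('I_(size cl) -> skel) -> skel, surj_module_hom mul inv one I phi
              (fun i : 'I_(size cl) => (nth (one, \bot) cl i).2) U h.
Proof.
move=> dom_cl le_U; pose W := [seq phi p.1 p.2 | p <- cl].
eexists; apply: (@surj_cover_hom _ _ _ (fun i => nth \bot (pieces U W) i)).
- by move=> i; apply/dom_cl/In_nth.
- by move=> i; have /andP [_] := nth_pieces_le U W i; rewrite (nth_map (one, \bot)).
- by move=> i; have /andP [] := nth_pieces_le U W i.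
- move=> x; rewrite -(pieces_partition x (W := W)); last by rewrite big_map.
  by rewrite (big_nth \bot) size_pieces size_map big_mkord.
Qed.

End SkewGroupRing.

Theorem lemma4p9 (R : comPzRingType)
  (G : Type) (mul : G -> G -> G) (inv : G -> G) (one : G)
  (d : Order.disp_t) (B2 : cbDistrLatticeType d)
  (B1 : B2 -> Prop) (I1 : G -> B2 -> Prop) (phi1 : G -> B2 -> B2)
  (I2 : G -> B2 -> Prop) (phi2 : G -> B2 -> B2) :
  group_laws mul inv one ->
  is_partial_subaction mul inv one B1 I1 phi1 I2 phi2 ->
  is_ideal (fun _ => True) B1 ->
  (forall U : B2, exists l : seq (G * B2),
      (forall p, List.In p l -> I2 (inv p.1) p.2 /\ B1 p.2) /\
      U <= \join_(p <- l) phi2 p.1 p.2) ->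
  forall U : B2, exists (J : Type) (Us : J -> B2),
    (forall i, B1 (Us i)) /\
    exists h : (J -> G -> stone B2 -> R) -> G -> stone B2 -> R,
      surj_module_hom mul inv one I2 phi2 Us U h.
Proof.
move=> GL [_ _ PA _ _] _ cover U; have [cl [cl_dom le_U]] := cover U.
exists 'I_(size cl), (fun i => (nth (one, \bot) cl i).2); split.
  by move=> i; have [] := cl_dom _ (In_nth (one, \bot) (ltn_ord i)).
exact: (cover_surj_module_hom GL PA R (fun p lp => proj1 (cl_dom p lp)) le_U).
Qed.
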